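(* Let $q=2^m$ with $m\ge2$, $c\in\mathrm{GF}(q^2)^*\setminus U_{q+1}$, and $e$ an integer with $1\le e\le q$. Let $a_0+a_1u+\cdots+a_qu^q$ ($a_i\in\mathrm{GF}(q^2)$) be the polynomial expansion of the function $U_{q+1}\to\mathrm{GF}(q^2)$, $u\mapsto\left(\frac{u+c^q}{cu+1}\right)^e$. Then $a_0=0$ and $a_1=c^{q(e-1)}$.
   Context: $U_{q+1}$ denotes the set of $(q+1)$-th roots of unity in $\mathrm{GF}(q^2)$. The polynomial expansion of a function $f:U_{q+1}\to\mathrm{GF}(q^2)$ is the unique polynomial $\sum_{i=0}^{q}a_iu^i$ of degree at most $q$ with $f(u)=\sum_{i=0}^q a_iu^i$ for all $u\in U_{q+1}$. *)

From HB Require Import structures.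
From mathcomp Require Import all_boot all_order all_algebra all_field.
Set Implicit Arguments. Unset Strict Implicit. Unset Printing Implicit Defensive.
Import GRing.Theory.
Local Open Scope ring_scope.

Definition unit_roots (F : fieldType) (q : nat) : pred F :=
  fun u => u ^+ q.+1 == 1.

(* p : {poly F} is the polynomial expansion of f : U_{q+1} -> F:
   degree at most q (size <= q+1) and agreeing with f on U_{q+1}.
   (Such a polynomial is unique by interpolation, since |U_{q+1}| = q+1.) *)
Definition poly_expansion (F : fieldType) (q : nat) (f : F -> F) (p : {poly F}) :=
  (size p <= q.+1)%N /\ forall u, unit_roots q u -> p.[u] = f u.

(* Since q is even, q + 1 = 1 in GF(q^2), so the coefficients of the expansion
   of f on the group U of (q+1)-th roots of unity are the discrete Fourier
   coefficients a_k = sum_(u in U) f(u) u^(q+1-k), with U enumerated by the powers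
   of a primitive root w.  In characteristic 2 the matrix [[1, c^q], [c, 1]] of
   the Moebius map g(u) = (u + c^q) / (c u + 1) squares to the scalar
   1 + c^(q+1) <> 0, so g is an involution of U; and u^q = u^-1 on U gives
   g(u)^q = 1 / g(u).  Substituting u := g(u) turns a_0 into sum_u u^e = 0 and
   a_1 into sum_u u^e (c u + 1) / (u + c^q).  Expanding
   1 / (u + c^q) = (1 + c^(q+1))^-1 sum_j u^(q-j) c^(qj) and using orthogonality
   of the characters u |-> u^k of U leaves only the terms j = e and j = e - 1,
   which add up to c^(q(e-1)). *)

From HB Require Import structures.
From mathcomp Require Import all_boot all_order all_algebra all_field all_solvable.
From mathcomp Require Import ring zify.
Set Implicit Arguments.
Unset Strict Implicit.
Unset Printing Implicit Defensive.
Import GRing.Theory.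
Local Open Scope ring_scope.

Lemma dvdn_add_subn n a j : (a < n)%N -> (j < n)%N -> (n %| a + (n - j))%N = (j == a).
Proof.
move=> ltan ltjn; apply/idP/eqP => [/dvdnP[[|[|k]] Ek] | ->].
- by move: Ek; rewrite mul0n; lia.
- by move: Ek; rewrite mul1n; lia.
- by move: Ek; rewrite !mulSn; lia.
- by rewrite subnKC // ltnW.
Qed.

Lemma sum_mul_delta (R : pzSemiRingType) n k (G : nat -> R) (x : R) : (k < n)%N ->
  \sum_(j < n) G j * (if j == k :> nat then x else 0) = G k * x.
Proof.
move=> ltkn; under eq_bigr => j _ do rewrite (fun_if ( *%R (G j))) mulr0.
by rewrite -big_mkcond (big_ord1_eq _ (fun j => G j * x)) ltkn.
Qed.

Lemma finField_prim_root (F : finFieldType) n :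
  (n %| #|F|.-1)%N -> exists w : F, n.-primitive_root w.
Proof.
move=> dvd_n.
have F_gt1 : (1 < #|F|)%N := finNzRing_gt1 _.
have F_gt0 : (0 < #|F|.-1)%N by rewrite -subn1 subn_gt0.
have /hasP[z _ z_prim] : has (#|F|.-1).-primitive_root (enum (predC1 (0 : F))).
  apply: has_prim_root => //; last by rewrite -cardE cardC1.
  - apply/allP => x; rewrite mem_enum /= => x_neq0; rewrite unity_rootE.
    by apply/eqP/(mulIf x_neq0); rewrite -exprSr prednK ?expf_card ?mul1r // ltnW.
  - exact: enum_uniq.
by exists (z ^+ (#|F|.-1 %/ n)); apply: dvdn_prim_root.
Qed.

Section PrimitiveRootSums.
Variables (F : fieldType) (n : nat) (w : F).
Hypothesis w_prim : n.-primitive_root w.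

Lemma prim_root_expX_order i : (w ^+ i) ^+ n = 1.
Proof. by rewrite exprAC (prim_expr_order w_prim) expr1n. Qed.

Lemma sum_prim_root_exp t :
  \sum_(i < n) (w ^+ i) ^+ t = if (n %| t)%N then n%:R else 0.
Proof.
under eq_bigr do rewrite exprAC.
case: ifPn => [/dvdnP[k ->] | n_ndvd_t].
  under eq_bigr do rewrite mulnC exprM (prim_expr_order w_prim) !expr1n.
  by rewrite sumr_const card_ord.
have wt_neq1 : w ^+ t != 1.
  by rewrite -(expr0 w) (eq_prim_root_expr w_prim) mod0n.
apply/eqP; have := subrX1 (w ^+ t) n.
rewrite exprAC (prim_expr_order w_prim) expr1n subrr => /esym/eqP.
by rewrite mulf_eq0 subr_eq0 (negbTE wt_neq1).
Qed.

Lemma sum_prim_root_orthogonal a j : (a < n)%N -> (j < n)%N ->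
  \sum_(i < n) (w ^+ i) ^+ (a + (n - j)) = if j == a then n%:R else 0.
Proof. by move=> ltan ltjn; rewrite sum_prim_root_exp dvdn_add_subn. Qed.

Lemma coef_prim_root_interp (p : {poly F}) k : (size p <= n)%N -> (k < n)%N ->
  n%:R * p`_k = \sum_(i < n) p.[w ^+ i] * (w ^+ i) ^+ (n - k).
Proof.
move=> size_p ltkn.
under eq_bigr do rewrite (horner_coef_wide _ size_p) mulr_suml.
rewrite exchange_big /=.
under eq_bigr => j _.
  under eq_bigr do rewrite -mulrA -exprD.
  rewrite -mulr_sumr sum_prim_root_orthogonal // eq_sym.
  over.
by rewrite sum_mul_delta // mulrC.
Qed.

Lemma sum_prim_root_involution (g G : F -> F) :
  (forall u, u ^+ n = 1 -> g u ^+ n = 1) -> (forall u, u ^+ n = 1 -> g (g u) = u) ->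
  \sum_(i < n) G (g (w ^+ i)) = \sum_(i < n) G (w ^+ i).
Proof.
move=> gU gK.
pose h (i : 'I_n) := sval (prim_rootP w_prim (gU _ (prim_root_expX_order i))).
have hE (i : 'I_n) : g (w ^+ i) = w ^+ h i := svalP (prim_rootP w_prim _).
have h_inj : injective h.
  move=> i j /(congr1 (fun k : 'I_n => g (w ^+ k))).
  rewrite -!hE !gK ?prim_root_expX_order // => /eqP.
  by rewrite (eq_prim_root_expr w_prim) !modn_small // => /eqP/val_inj.
by rewrite [RHS](reindex_inj h_inj); apply: eq_bigr => i _; rewrite hE.
Qed.
End PrimitiveRootSums.

Definition moebius {F : fieldType} (c d u : F) := (u + d) / (c * u + 1).

Lemma moebiusK (F : fieldType) (c d u : F) : 2 \in [pchar F] ->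
  1 + c * d != 0 -> c * u + 1 != 0 -> moebius c d (moebius c d u) = u.
Proof.
move=> F_char2 cd_neq0 den_neq0.
have num_E : (u + d) + d * (c * u + 1) = u * (1 + c * d).
  by rewrite -[RHS]addr0 -(addrr_pchar2 F_char2 d); ring.
have den_E : c * (u + d) + (c * u + 1) = 1 + c * d.
  by rewrite -[RHS]addr0 -(addrr_pchar2 F_char2 (c * u)); ring.
have gd_E : moebius c d u + d = u * (1 + c * d) / (c * u + 1).
  by rewrite -num_E /moebius; field.
have cg1_E : c * moebius c d u + 1 = (1 + c * d) / (c * u + 1).
  by rewrite -den_E /moebius; field.
by rewrite {1}/moebius gd_E cg1_E; field; rewrite cd_neq0 den_neq0.
Qed.

Section MoebiusOnUnitCircle.
Variables (F : fieldType) (m : nat) (c : F).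
Local Notation q := (2 ^ m)%N.
Local Notation d := (c ^+ q).
Local Notation g := (moebius c d).
Hypotheses (m_gt0 : (0 < m)%N) (F_char2 : 2 \in [pchar F]).
Hypotheses (d_expq : d ^+ q = c) (c_notin_U : c ^+ q.+1 != 1).

Lemma natr_Sq : q.+1%:R = 1 :> F.
Proof.
by rewrite -addn1 natrD natrX (pcharf0 F_char2) expr0n eqn0Ngt m_gt0 add0r.
Qed.

Lemma exprDq (x y : F) : (x + y) ^+ q = x ^+ q + y ^+ q.
Proof.
apply: exprDn_pchar; rewrite (eq_pnat _ (pcharf_eq F_char2)).
by rewrite pnatX pnat_id.
Qed.

Lemma one_add_cd_neq0 : 1 + c * d != 0.
Proof.
by apply: contra c_notin_U; rewrite addr_eq0 oppr_pchar2 // eq_sym exprS.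
Qed.

Lemma mul_unit_root_add1_neq0 u : u ^+ q.+1 = 1 -> c * u + 1 != 0.
Proof.
move=> uU; apply: contra c_notin_U; rewrite addr_eq0 oppr_pchar2 // => /eqP cu1.
by rewrite -(mulr1 (c ^+ _)) -[X in _ * X]uU -exprMn cu1 expr1n.
Qed.

Lemma expq_mul_unit_root_add1 u : u ^+ q.+1 = 1 -> (c * u + 1) ^+ q = u ^+ q * (u + d).
Proof.
by move=> uU; rewrite exprDq exprMn expr1n mulrDr -exprSr uU mulrC addrC.
Qed.

Lemma unit_root_add_d_neq0 u : u ^+ q.+1 = 1 -> u + d != 0.
Proof.
move=> uU; have : (c * u + 1) ^+ q != 0 by rewrite expf_neq0 ?mul_unit_root_add1_neq0.
by rewrite expq_mul_unit_root_add1 // mulf_eq0 negb_or => /andP[].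
Qed.

Lemma moebius_expq u : u ^+ q.+1 = 1 -> g u ^+ q = (c * u + 1) / (u + d).
Proof.
move=> uU; have uq_neq0 : u ^+ q != 0.
  by apply/eqP => uq0; move: uU; rewrite exprSr uq0 mul0r => /eqP; rewrite eq_sym oner_eq0.
have num_E : u ^+ q + c = u ^+ q * (c * u + 1).
  by rewrite mulrDr mulr1 mulrCA -exprSr uU mulr1 addrC.
rewrite /moebius expr_div_n exprDq d_expq expq_mul_unit_root_add1 // num_E.
by field; rewrite uq_neq0 unit_root_add_d_neq0.
Qed.

Lemma moebius_unit_root u : u ^+ q.+1 = 1 -> g u ^+ q.+1 = 1.
Proof.
move=> uU; rewrite exprS moebius_expq // /moebius.
by field; rewrite unit_root_add_d_neq0 ?mul_unit_root_add1_neq0.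
Qed.

Lemma moebius_unit_rootK u : u ^+ q.+1 = 1 -> g (g u) = u.
Proof. by move=> uU; rewrite moebiusK ?one_add_cd_neq0 ?mul_unit_root_add1_neq0. Qed.

Lemma mul_add_d_geometric u : u ^+ q.+1 = 1 ->
  (u + d) * \sum_(j < q.+1) u ^+ (q - j) * d ^+ j = 1 + c * d.
Proof.
move=> uU; have := subrXX u d q.+1.
by rewrite uU exprSr d_expq !oppr_pchar2 // => <-.
Qed.

Lemma exp_mul_moebius_expqE u e : u ^+ q.+1 = 1 -> (0 < e)%N ->
  u ^+ e * g u ^+ q = (1 + c * d)^-1 *
    \sum_(j < q.+1) d ^+ j * (c * u ^+ (e + (q.+1 - j)) + u ^+ (e.-1 + (q.+1 - j))).
Proof.
move=> uU e_gt0; set S := \sum_(j < q.+1) u ^+ (q - j) * d ^+ j.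
have S_E : S = (1 + c * d) / (u + d).
  by rewrite -(mul_add_d_geometric uU) -/S; field; rewrite unit_root_add_d_neq0.
have -> : \sum_(j < q.+1) d ^+ j * (c * u ^+ (e + (q.+1 - j)) + u ^+ (e.-1 + (q.+1 - j)))
    = u ^+ e * (c * u + 1) * S.
  rewrite mulr_sumr; apply: eq_bigr => j _.
  have j_le_q : (j <= q)%N := ltn_ord j.
  by rewrite subSn // !addnS -!addSn prednK // !exprD !exprS; ring.
rewrite moebius_expq // S_E; field.
by rewrite one_add_cd_neq0 unit_root_add_d_neq0.
Qed.

Variable w : F.
Hypothesis w_prim : q.+1.-primitive_root w.

Lemma sum_moebius_exp e : (0 < e < q.+1)%N -> \sum_(i < q.+1) g (w ^+ i) ^+ e = 0.
Proof.
case/andP=> e_gt0 lt_e_n.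
rewrite (sum_prim_root_involution w_prim (fun u => u ^+ e)
  moebius_unit_root moebius_unit_rootK).
by rewrite sum_prim_root_exp // gtnNdvd.
Qed.

Lemma sum_exp_mul_moebius_expq e : (0 < e < q.+1)%N ->
  \sum_(i < q.+1) (w ^+ i) ^+ e * g (w ^+ i) ^+ q = d ^+ e.-1.
Proof.
case/andP=> e_gt0 lt_e_n; have lt_e1_n := leq_ltn_trans (leq_pred e) lt_e_n.
under eq_bigr do rewrite exp_mul_moebius_expqE ?(prim_root_expX_order w_prim) //.
rewrite -mulr_sumr exchange_big /=.
under eq_bigr => j _.
  rewrite -mulr_sumr big_split /= -mulr_sumr !sum_prim_root_orthogonal ?natr_Sq //.
  rewrite mulrDr mulrA.
  over.
rewrite /= big_split /= (sum_mul_delta (fun j => d ^+ j * c)) // sum_mul_delta //.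
rewrite -[in d ^+ e](prednK e_gt0) exprS.
by field; rewrite one_add_cd_neq0.
Qed.

Lemma sum_moebius_exp_mul_expq e : (0 < e < q.+1)%N ->
  \sum_(i < q.+1) g (w ^+ i) ^+ e * (w ^+ i) ^+ q = d ^+ e.-1.
Proof.
move=> e_range; rewrite -(sum_exp_mul_moebius_expq e_range).
rewrite -(sum_prim_root_involution w_prim (fun u => u ^+ e * g u ^+ q)
  moebius_unit_root moebius_unit_rootK).
by apply: eq_bigr => i _; rewrite moebius_unit_rootK ?(prim_root_expX_order w_prim).
Qed.
End MoebiusOnUnitCircle.

Theorem lemma10 (F : finFieldType) (m q : nat) (hm : (2 <= m)%N) (hq : q = (2 ^ m)%N)
  (hF : #|F| = (q ^ 2)%N) (c : F) (hc0 : c != 0) (hcU : ~~ unit_roots q c)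
  (e : nat) (he : (1 <= e <= q)%N) (p : {poly F})
  (hp : poly_expansion q (fun u => ((u + c ^+ q) / (c * u + 1)) ^+ e) p) :
  p`_0 = 0 /\ p`_1 = c ^+ (q * (e - 1)).
Proof.
subst q; set q := (2 ^ m)%N; have m_gt0 : (0 < m)%N := ltnW hm.
have F_char2 : 2 \in [pchar F].
  by apply: (@card_finPcharP _ _ (m * 2)); rewrite // hF -expnM.
have d_expq : (c ^+ q) ^+ q = c by rewrite -exprM mulnn -hF expf_card.
have [w w_prim] : exists w : F, q.+1.-primitive_root w.
  apply: finField_prim_root.
  by rewrite hF -subn1 -[X in (_ - X)%N](exp1n 2) subn_sqr addn1 dvdn_mull.
have [size_p p_E] := hp.
have coefE k : (k < q.+1)%N ->
    p`_k = \sum_(i < q.+1) moebius c (c ^+ q) (w ^+ i) ^+ e * (w ^+ i) ^+ (q.+1 - k).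
  move=> lt_k; rewrite -[LHS]mul1r -(natr_Sq m_gt0 F_char2).
  rewrite (coef_prim_root_interp w_prim) //; apply: eq_bigr => i _.
  by rewrite p_E //; apply/eqP/(prim_root_expX_order w_prim).
have e_range : (0 < e < q.+1)%N by rewrite ltnS.
split.
- rewrite coefE //; under eq_bigr do rewrite subn0 (prim_root_expX_order w_prim) mulr1.
  exact: sum_moebius_exp.
- rewrite coefE ?ltnS ?expn_gt0 // subn1.
  by rewrite sum_moebius_exp_mul_expq // -exprM subn1.
Qed.
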